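(* Let $\Theta = (\Theta_1, \Theta_2)$ be such that $\bar\Theta:=\Theta-\Theta(\gamma=0)$ solves $\partial_t \bar \Theta_1 + 4 \gamma \partial_\gamma \bar \Theta_1 + 6 \bar \Theta_1 - 13 \bar \Theta_2 = 0$, $\partial_t \bar \Theta_2 + 4 \gamma \partial_\gamma \bar \Theta_2 + 9 \bar\Theta_2 - \frac{10} {1+\gamma^2}\big(\bar \Theta_1 + \gamma^2 \frac{2}{\pi}\int_0^\infty \bar \Theta_1\frac{d\gamma}{1+\gamma^2}\big) = 0$ with initial conditions $\Theta(t=0) = \Theta^{(0)}$. Then $$10 \int_0^t \Big(\frac{2}{\pi}\int_0^\infty \bar \Theta_1(s)\frac{d\gamma}{1+\gamma^2}\Big) \kappa(t-s)\, ds = \frac 2 \pi \mathcal{I}(\Theta^{(0)}) - \frac 2 \pi\int_0^\infty\Big(\bar{\Theta}^{(0)}_1 w_1(t) + \bar{\Theta}^{(0)}_2 w_2(t) \Big) \frac{d\gamma}{\gamma^2},$$ where $\kappa(r) := \frac 2 \pi \int_0^\infty \frac{w_2(r)}{1+\gamma^2} d \gamma$, $\mathcal{I}(\Theta^{(0)}) = \int_0^\infty \big(\bar{\Theta}^{(0)}_1 + \bar{\Theta}^{(0)}_2 \big)\frac{d\gamma}{\gamma^2}$, and $(w_1, w_2)$ solve on $[0,\infty)_t\times[0,\infty)_\gamma$: $\partial_t w_1 - 4 \gamma \partial_\gamma w_1 + 10 w_1 - \frac{10}{1+\gamma^2} w_2 = 0$, $\partial_t w_2 - 4 \gamma \partial_\gamma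 w_2 + 13 w_2 - 13 w_1 = 0$, with $(w_1, w_2)(t=0) = (1,1)$.
   Context: $\gamma=\tan\theta$, so $\frac{2}{\pi}\int_0^\infty f\frac{d\gamma}{1+\gamma^2}$ equals the angular average $\frac{2}{\pi}\int_0^{\pi/2} f\,d\theta$. $\bar\Theta^{(0)}=\Theta^{(0)}-\Theta^{(0)}(\gamma=0)$. *)

From HB Require Import structures.
From mathcomp Require Import all_boot all_order all_algebra.
From mathcomp Require Import all_classical all_reals all_analysis.
Set Implicit Arguments. Unset Strict Implicit. Unset Printing Implicit Defensive.
Import Order.TTheory GRing.Theory Num.Theory.
Import numFieldNormedType.Exports.
Local Open Scope classical_set_scope.
Local Open Scope ring_scope.

Definition int0oo {R : realType} (f : R -> R) : R :=
  \int[(@lebesgue_measure R)]_(g in `]0%R, +oo[) f g.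

Definition bar {R : realType} (Th : R -> R -> R) (t g : R) : R := Th t g - Th t 0.

Definition dt {R : realType} (F : R -> R -> R) (t g : R) : R := derive1 (fun s => F s g) t.
Definition dg {R : realType} (F : R -> R -> R) (t g : R) : R := derive1 (fun h => F t h) g.

Definition avg {R : realType} (f : R -> R) : R :=
  2 / pi * int0oo (fun g => f g / (1 + g ^+ 2)).

Definition wint {R : realType} (f : R -> R) : R := int0oo (fun g => f g / g ^+ 2).

Definition kappa {R : realType} (w2 : R -> R -> R) (r : R) : R := avg (w2 r).

Definition Ifun {R : realType} (Th01 Th02 : R -> R) : R :=
  wint (fun g => (Th01 g - Th01 0) + (Th02 g - Th02 0)).

(* Fix t > 0 and pair bar Theta(s) with 1 - w(t - s), the dual solution run
   backwards from time t:
     G(s) = int_0^oo (bTh1(s) (1 - w1(t - s)) + bTh2(s) (1 - w2(t - s))) dg / g^2.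
   Since w(0) = 1, G(t) = 0, while G(0) = I(Theta0) - int_0^oo (bTh0 . w(t)) dg / g^2.
   By the two systems, the s-derivative of the integrand is
     -4 d/dg (g^-1 bTh(s) . (1 - w(t - s))) + 10 (a - bTh1(s) - a w2(t - s)) / (1 + g^2),
   with a = avg (bTh1(s)).  The transport term integrates to zero because
   g^-1 bTh . (1 - w) = O(g / (1 + g^2)) vanishes at both ends of the half-line, and
   the rest integrates to -5 pi a kappa(t - s).  Integrating G' over [0, t] gives the
   formula. *)

From HB Require Import structures.
From mathcomp Require Import all_boot all_order all_algebra.
From mathcomp Require Import all_classical all_reals all_analysis.
From mathcomp Require Import measurable_realfun.
From mathcomp.algebra_tactics Require Import ring lra.
Import Order.TTheory GRing.Theory Num.Theory.
Import numFieldNormedType.Exports.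
Local Open Scope classical_set_scope.
Local Open Scope ring_scope.

Section calculus.
Context {R : realType}.
Implicit Types (f : R -> R) (x t : R).

Lemma derivable1_continuous {f x} : derivable f x 1 -> {for x, continuous f}.
Proof. by move=> /derivable1_diffP/differentiable_continuous. Qed.

Lemma continuous_sqrV {x} : 0 < x -> {for x, continuous (fun y : R => (y ^+ 2)^-1)}.
Proof. by move=> x0; apply: cvgV; [rewrite expf_neq0 // gt_eqF|exact: exprn_continuous]. Qed.

Lemma derivable1_is_derive {f x} : derivable f x 1 -> is_derive x 1 f (derive1 f x).
Proof. by move=> /derivableP; rewrite derive1E. Qed.

Lemma is_derive_dot2 {f1 f2 h1 h2 x} {df1 df2 dh1 dh2 : R} :
  is_derive x 1 f1 df1 -> is_derive x 1 f2 df2 ->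
  is_derive x 1 h1 dh1 -> is_derive x 1 h2 dh2 ->
  is_derive x 1 (fun y => f1 y * h1 y + f2 y * h2 y)
    (df1 * h1 x + f1 x * dh1 + (df2 * h2 x + f2 x * dh2)).
Proof.
move=> d1 d2 e1 e2; have := is_deriveD (is_deriveM d1 e1) (is_deriveM d2 e2).
by move/is_derive_eq; apply; rewrite /GRing.scale /=; ring.
Qed.

Lemma is_derive_oneB {f x} : derivable f x 1 ->
  is_derive x 1 (fun y => 1 - f y) (- derive1 f x).
Proof.
move=> /derivable1_is_derive df; have := is_deriveB (is_derive_cst (1 : R) x 1) df.
by move/is_derive_eq; apply; rewrite sub0r.
Qed.

Lemma is_derive_reflect t x : is_derive x 1 (fun s => t - s) (-1).
Proof.
have := is_deriveB (is_derive_cst t x 1) (is_derive_id x 1).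
by move/is_derive_eq; apply; rewrite sub0r.
Qed.

Lemma is_derive_oneB_reflect {f t x} : derivable f (t - x) 1 ->
  is_derive x 1 (fun s => 1 - f (t - s)) (derive1 f (t - x)).
Proof.
move=> /derivable1_is_derive df.
have := is_deriveB (is_derive_cst (1 : R) x 1)
  (@is_derive1_comp _ f (fun s => t - s) x _ _ df (is_derive_reflect t x)).
by move/is_derive_eq; apply; rewrite sub0r mulrN1 opprK.
Qed.

Lemma continuous_within_itv0 {f t} : 0 < t ->
  (forall s, 0 < s -> derivable f s 1) -> f @ 0^'+ --> f 0 ->
  {within `[0, t], continuous f}.
Proof.
move=> t0 df f0; apply/(continuous_within_itvP _ t0); split => //.
  by move=> s; rewrite in_itv /= => /andP[s0 _]; exact: derivable1_continuous (df s s0).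
by apply: cvg_at_left_filter; exact: derivable1_continuous (df t t0).
Qed.

Lemma cvg_at_left_reflect {f} t (l : R) :
  f @ 0^'+ --> l -> (fun s => f (t - s)) @ t^'- --> l.
Proof.
move=> fl; apply/cvg_at_leftP => u [ut u_cvg].
apply: ((cvg_at_rightP f 0 l).1 fl (fun n => t - u n)); split.
  by move=> n; rewrite subr_gt0.
by rewrite -(subrr t); apply: cvgB => //; exact: cvg_cst.
Qed.

Lemma continuous_within_itv0_reflect {f t} : 0 < t ->
  (forall s, 0 < s -> derivable f s 1) -> f @ 0^'+ --> f 0 ->
  {within `[0, t], continuous (fun s => f (t - s))}.
Proof.
move=> t0 df f0.
have cf s : s < t -> {for s, continuous (fun s => f (t - s))}.
  rewrite -subr_gt0 => /df/derivable1_is_derive dfs.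
  apply: derivable1_continuous.
  by case: (@is_derive1_comp _ f (fun s => t - s) s _ _ dfs (is_derive_reflect t s)).
apply/(continuous_within_itvP _ t0); split.
- by move=> s; rewrite in_itv /= => /andP[_ /cf].
- by apply: cvg_at_right_filter; exact: cf.
- by rewrite subrr; exact: cvg_at_left_reflect.
Qed.

Lemma le_norm_cvg0 {T : Type} {F : set_system T} {FF : Filter F} {f h : T -> R} :
  (\forall x \near F, `|f x| <= h x) -> h @ F --> 0 -> f @ F --> 0.
Proof.
move=> fh h0; apply: norm_cvg0; apply: (squeeze_cvgr _ (cvg_cst 0) h0).
by apply: filterS fh => x ->; rewrite normr_ge0.
Qed.

Lemma div_oneDsqr_le_min {x} : 0 < x -> x / (1 + x ^+ 2) <= Num.min x x^-1.
Proof.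
move=> x0; have x1 : 0 < 1 + x ^+ 2 by rewrite ltr_pwDl ?sqr_ge0.
rewrite le_min !ler_pdivrMr // ler_peMr ?(ltW x0) ?lerDl ?sqr_ge0 //=.
by rewrite mulrDr mulr1 expr2 mulKf ?gt_eqF // lerDr invr_ge0 ltW.
Qed.

Lemma cvg_at_right0_dominated {f} (K : R) :
  (forall x, 0 < x -> `|f x| <= K * (x / (1 + x ^+ 2))) -> f @ 0^'+ --> 0.
Proof.
move=> fK; apply: (le_norm_cvg0 (h := fun x => `|K| * x)).
  near=> x; have x0 : 0 < x by near: x; exact: nbhs_right_gt.
  rewrite (le_trans (fK x x0)) // (le_trans (ler_norm _)) // normrM ler_wpM2l //.
  rewrite ger0_norm ?divr_ge0 ?(ltW x0) ?addr_ge0 ?sqr_ge0 //.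
  by rewrite (le_trans (div_oneDsqr_le_min x0)) ?ge_min ?lexx.
rewrite -[X in _ --> X](mulr0 `|K|); apply: cvgM; first exact: cvg_cst.
exact: cvg_at_right_filter cvg_id.
Unshelve. all: by end_near.
Qed.

Lemma cvgy_dominated {f} (K : R) :
  (forall x, 0 < x -> `|f x| <= K * (x / (1 + x ^+ 2))) -> f @ +oo --> 0.
Proof.
move=> fK; apply: (le_norm_cvg0 (h := fun x => `|K| * x^-1)).
  near=> x; have x0 : 0 < x by near: x; apply: nbhs_pinfty_gt; exact: num_real.
  rewrite (le_trans (fK x x0)) // (le_trans (ler_norm _)) // normrM ler_wpM2l //.
  rewrite ger0_norm ?divr_ge0 ?(ltW x0) ?addr_ge0 ?sqr_ge0 //.
  by rewrite (le_trans (div_oneDsqr_le_min x0)) ?ge_min ?lexx ?orbT.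
rewrite -(mulr0 `|K|); apply: cvgM; first exact: cvg_cst.
have x_gt0 : \forall x \near +oo, 0 < x :> R by apply: nbhs_pinfty_gt; exact: num_real.
exact: (gtr0_cvgV0 x_gt0).2 cvg_id.
Unshelve. all: by end_near.
Qed.

Lemma cvg_dot2 {T : Type} {F : set_system T} {FF : Filter F} {f1 f2 h1 h2 : T -> R}
    {a1 a2 b1 b2 : R} :
  f1 @ F --> a1 -> f2 @ F --> a2 -> h1 @ F --> b1 -> h2 @ F --> b2 ->
  (fun y => f1 y * h1 y + f2 y * h2 y) @ F --> a1 * b1 + a2 * b2.
Proof. by move=> f1a f2a h1b h2b; apply: cvgD; exact: cvgM. Qed.

Lemma cvg_oneB {T : Type} {F : set_system T} {FF : Filter F} {f : T -> R} {a : R} :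
  f @ F --> a -> (fun y => 1 - f y) @ F --> 1 - a.
Proof. by move=> fa; apply: cvgB => //; exact: cvg_cst. Qed.

Lemma norm_dot2_le {a1 a2 b1 b2 A B : R} : `|a1| <= A -> `|a2| <= A ->
  `|b1| <= B -> `|b2| <= B -> `|a1 * b1 + a2 * b2| <= 2 * A * B.
Proof.
move=> a1A a2A b1B b2B; rewrite (le_trans (ler_normD _ _)) // !normrM.
by rewrite -mulrA mulr2n mulrDl mul1r lerD // ler_pM.
Qed.

Lemma norm_sqrVM_le {x X K : R} : 0 < x ->
  `|X| <= K * (x ^+ 2 / (1 + x ^+ 2)) -> `|(x ^+ 2)^-1 * X| <= K * (1 + x ^+ 2)^-1.
Proof.
move=> x0 XK; have x2 : 0 < x ^+ 2 by rewrite exprn_gt0.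
have -> : K * (1 + x ^+ 2)^-1 = (x ^+ 2)^-1 * (K * (x ^+ 2 / (1 + x ^+ 2))).
  by field; rewrite !gt_eqF // ltr_pwDl ?sqr_ge0.
by rewrite normrM gtr0_norm ?invr_gt0 // ler_wpM2l // invr_ge0 ltW.
Qed.

Lemma norm_invM_le {x X K : R} : 0 < x ->
  `|X| <= K * (x ^+ 2 / (1 + x ^+ 2)) -> `|x^-1 * X| <= K * (x / (1 + x ^+ 2)).
Proof.
move=> x0 XK; have -> : K * (x / (1 + x ^+ 2)) = x^-1 * (K * (x ^+ 2 / (1 + x ^+ 2))).
  by field; rewrite !gt_eqF // ltr_pwDl ?sqr_ge0.
by rewrite normrM gtr0_norm ?invr_gt0 // ler_wpM2l // invr_ge0 ltW.
Qed.
End calculus.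

Section half_line.
Context {R : realType}.
Local Notation mu := (@lebesgue_measure R).
Local Notation D := (`]0%R, +oo[%classic : set R).

Lemma oneDsqrV_ge0 (x : R) : 0 <= (1 + x ^+ 2)^-1.
Proof. by rewrite invr_ge0 addr_ge0 ?sqr_ge0. Qed.

Lemma continuous_half_line_measurable {f : R -> R} :
  {in D, continuous f} -> measurable_fun D (EFin \o f).
Proof.
move=> cf; apply/measurable_EFinP.
exact: open_continuous_measurable_fun (interval_open _ _) cf.
Qed.

Lemma integrable_oneDsqrV : mu.-integrable D (EFin \o fun x : R => (1 + x ^+ 2)^-1).
Proof.
apply: (@integrableS _ _ _ mu `[0%R, +oo[) => //.
  by apply: subset_itvr; rewrite bnd_simp.
apply/integrableP; split.
  apply/measurable_EFinP; apply: measurable_funS (continuous_measurable_fun _) => //.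
  exact: continuous_oneDsqrV.
under eq_integral => x _ do rewrite /= ger0_norm ?oneDsqrV_ge0 //.
by rewrite integral0y_oneDsqr ltry.
Qed.

Lemma int0oo_oneDsqrV : int0oo (fun x : R => (1 + x ^+ 2)^-1) = pi / 2.
Proof.
rewrite /int0oo Rintegral_itv_obnd_cbnd; last exact: integrable_oneDsqrV.
by rewrite /Rintegral integral0y_oneDsqr.
Qed.

Lemma dominated_oneDsqrV_integrable {f : R -> R} {K : R} :
  {in D, continuous f} -> (forall x, 0 < x -> `|f x| <= K * (1 + x ^+ 2)^-1) ->
  mu.-integrable D (EFin \o f).
Proof.
move=> cf fK.
eapply le_integrable; [by []|exact: continuous_half_line_measurable cf| |].
  2: by apply: integrableZl => //; exact: integrable_oneDsqrV.
move=> x /=; rewrite in_itv /= andbT => x0; rewrite lee_fin (le_trans (fK _ x0)) //.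
by rewrite normrM (ger0_norm (oneDsqrV_ge0 _)) ler_wpM2r ?oneDsqrV_ge0 ?ler_norm.
Qed.

Lemma norm_int0oo_le {f : R -> R} {K : R} :
  {in D, continuous f} -> (forall x, 0 < x -> `|f x| <= K * (1 + x ^+ 2)^-1) ->
  `|int0oo f| <= K * (pi / 2).
Proof.
move=> cf fK; have fi := dominated_oneDsqrV_integrable cf fK.
rewrite (le_trans (le_normr_Rintegral _ fi)) // -int0oo_oneDsqrV /int0oo.
rewrite -RintegralZl //; last exact: integrable_oneDsqrV.
apply: le_Rintegral => //.
- exact: integrable_norm fi.
- exact: integrableZl _ _ integrable_oneDsqrV.
- by move=> x; rewrite /= in_itv /= andbT; exact: fK.
Qed.

Lemma segment_cvg_int0oo {f : R -> R} : mu.-integrable D (EFin \o f) ->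
  \int[mu]_(x in `[(n.+2%:R)^-1, n.+2%:R]) f x @[n --> \oo] --> int0oo f.
Proof.
move=> fi; have segD n : `[(n.+2%:R)^-1, n.+2%:R] `<=` D.
  by move=> x /=; rewrite !in_itv /= andbT => /andP[+ _]; apply: lt_le_trans.
rewrite /int0oo /Rintegral; apply: fine_cvg; rewrite fineK; last exact: integrable_fin_num.
have -> : (fun n => \int[mu]_(x in `[(n.+2%:R)^-1%R, n.+2%:R%R]) (f x)%:E)%E =
    (fun n => \int[mu]_(x in D) ((EFin \o f) \_ `[(n.+2%:R)^-1%R, n.+2%:R%R]) x)%E.
  by apply/funext => n; rewrite -integral_mkcondr setIidr.
apply: (@dominated_cvg _ _ _ mu D _ _ _ (EFin \o (Num.norm \o f))) => //.
- move=> n; apply/measurable_restrict => //.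
  by apply: measurable_funS (measurable_int _ fi) => //; exact: subIsetl.
- move=> x; rewrite /= in_itv /= andbT => x0; apply: cvg_near_cst.
  have nS (n : nat) : n%:R <= n.+2%:R :> R by rewrite ler_nat -addn2 leq_addr.
  near=> n; rewrite patchE mem_set //= in_itv /=; apply/andP; split.
    rewrite invf_ple ?posrE ?ltr0n // (le_trans _ (nS n)) //.
    by near: n; exact: nbhs_infty_ger.
  by rewrite (le_trans _ (nS n)) //; near: n; exact: nbhs_infty_ger.
- exact: integrable_norm fi.
- move=> n x _; rewrite patchE; case: ifPn => _ /=; first by [].
  by rewrite normr0 lee_fin.
Unshelve. all: by end_near.
Qed.

Lemma int0oo_derive_eq0 {k dk : R -> R} :
  (forall x : R, 0 < x -> is_derive x 1 k (dk x)) -> {in D, continuous dk} ->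
  mu.-integrable D (EFin \o dk) ->
  k @ 0^'+ --> 0 -> k @ +oo --> 0 -> int0oo dk = 0.
Proof.
move=> dkk cdk idk k0 koo.
pose a n : R := (n.+2%:R)^-1; pose b n : R := n.+2%:R.
have a_gt0 n : 0 < a n by rewrite invr_gt0 ltr0n.
have ab n : a n < b n by rewrite (@lt_trans _ _ 1) ?invf_lt1 ?ltr1n.
have kc x : 0 < x -> {for x, continuous k}.
  by move=> x0; case: (dkk x x0) => /derivable1_continuous.
have ftc n : \int[mu]_(x in `[a n, b n]) dk x = k (b n) - k (a n).
  rewrite /Rintegral (@continuous_FTC2 _ _ k _ _ (ab n)) //.
  - apply: continuous_in_subspaceT => x; rewrite inE /= in_itv /= => /andP[ax _].
    by apply: cdk; rewrite inE /= in_itv /= andbT (lt_le_trans (a_gt0 n)).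
  - split.
    + move=> x; rewrite in_itv /= => /andP[ax _].
      by case: (dkk x (lt_trans (a_gt0 n) ax)).
    + by apply: cvg_at_right_filter; exact: kc.
    + by apply: cvg_at_left_filter; apply: kc; exact: lt_trans (ab n).
  - move=> x; rewrite in_itv /= => /andP[ax _].
    by rewrite derive1E; apply: derive_val; exact: dkk (lt_trans (a_gt0 n) ax).
have b_cvg : b n @[n --> \oo] --> +oo.
  apply/cvgryPge => r; near=> n; rewrite (@le_trans _ _ n%:R) ?ler_nat ?leqW //.
  by near: n; exact: nbhs_infty_ger.
have a_cvg : a n @[n --> \oo] --> 0.
  have b_gt0 : \forall n \near \oo, 0 < b n by apply: nearW => m; exact: ltr0Sn.
  exact: (gtr0_cvgV0 b_gt0).2 b_cvg.
have := segment_cvg_int0oo idk; rewrite (eq_cvg _ _ ftc) => int_cvg.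
suff : k (b n) - k (a n) @[n --> \oo] --> 0 by exact: cvg_unique int_cvg.
rewrite -[0]subr0; apply: cvgB; first exact: (cvg_pinftyP k 0).1 koo _ b_cvg.
by apply: ((cvg_at_rightP k 0 0).1 k0); split.
Unshelve. all: by end_near.
Qed.

Lemma int0oo_linear (a b : R) {f h : R -> R} :
  mu.-integrable D (EFin \o f) -> mu.-integrable D (EFin \o h) ->
  int0oo (fun x => a * f x + b * h x) = a * int0oo f + b * int0oo h.
Proof.
have Zi c (k : R -> R) : mu.-integrable D (EFin \o k) ->
    mu.-integrable D (EFin \o fun x => c * k x).
  by move=> ki; apply: eq_integrable (integrableZl _ c ki).
by move=> fi hi; rewrite /int0oo RintegralD ?Zi // !RintegralZl.
Qed.

Lemma norm_div_oneDsqr_le {f : R -> R} {K : R} (x : R) :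
  `|f x| <= K -> `|f x / (1 + x ^+ 2)| <= K * (1 + x ^+ 2)^-1.
Proof.
by move=> fK; rewrite normrM (ger0_norm (oneDsqrV_ge0 _)) ler_wpM2r ?oneDsqrV_ge0.
Qed.

Lemma continuous_div_oneDsqr {f : R -> R} (x : R) : {for x, continuous f} ->
  {for x, continuous (fun y => f y / (1 + y ^+ 2))}.
Proof. by move=> cf; apply: cvgM => //; exact: continuous_oneDsqrV. Qed.

Lemma bounded_avg_integrable {f : R -> R} {K : R} :
  {in D, continuous f} -> (forall x, 0 < x -> `|f x| <= K) ->
  mu.-integrable D (EFin \o fun x => f x / (1 + x ^+ 2)).
Proof.
move=> cf fK; apply: (dominated_oneDsqrV_integrable (K := K)).
  by move=> x /cf; exact: continuous_div_oneDsqr.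
by move=> x /fK; exact: norm_div_oneDsqr_le.
Qed.

Lemma int0oo_avg (f : R -> R) : int0oo (fun x => f x / (1 + x ^+ 2)) = pi / 2 * avg f.
Proof.
have pi_neq0 : pi != 0 :> R by rewrite gt_eqF ?pi_gt0.
by rewrite /avg mulrA [pi / 2 * _]mulrC !mulrA divfK // mulfV ?mul1r.
Qed.

Lemma norm_avg_le {f : R -> R} {K : R} :
  {in D, continuous f} -> (forall x, 0 < x -> `|f x| <= K) -> `|avg f| <= K.
Proof.
move=> cf fK; have pi_gt0 : 0 < pi :> R := pi_gt0 R.
have := norm_int0oo_le (fun x xD => continuous_div_oneDsqr x (cf x xD))
  (fun x x0 => norm_div_oneDsqr_le x (fK x x0)).
rewrite int0oo_avg normrM gtr0_norm ?divr_gt0 // mulrC ler_pM2r ?divr_gt0 //.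
Qed.

Lemma avg_cst (c : R) : avg (fun=> c) = c.
Proof.
have pi_neq0 : pi != 0 :> R by rewrite gt_eqF ?pi_gt0.
rewrite /avg /int0oo RintegralZl //; last exact: integrable_oneDsqrV.
rewrite -/(int0oo _) int0oo_oneDsqrV.
by move: pi_neq0; move: (pi : R) => p p0; field.
Qed.

Lemma avgB (f h : R -> R) :
  mu.-integrable D (EFin \o fun x => f x / (1 + x ^+ 2)) ->
  mu.-integrable D (EFin \o fun x => h x / (1 + x ^+ 2)) ->
  avg (fun x => f x - h x) = avg f - avg h.
Proof.
move=> fi hi; rewrite /avg -mulrBr /int0oo -RintegralB //.
by under eq_Rintegral do rewrite mulrBl.
Qed.

Lemma avgZ (c : R) (f : R -> R) :
  mu.-integrable D (EFin \o fun x => f x / (1 + x ^+ 2)) ->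
  avg (fun x => c * f x) = c * avg f.
Proof.
move=> fi; rewrite /avg /int0oo.
by under eq_Rintegral do rewrite -mulrA; rewrite RintegralZl // mulrCA.
Qed.

Lemma avg_affine (c : R) {f h : R -> R} {Kf Kh : R} :
  {in D, continuous f} -> {in D, continuous h} ->
  (forall x, 0 < x -> `|f x| <= Kf) -> (forall x, 0 < x -> `|h x| <= Kh) ->
  avg (fun x => c - f x - c * h x) = c - avg f - c * avg h.
Proof.
move=> cf ch fK hK.
have cfc : {in D, continuous (fun x => c - f x)}.
  by move=> x /cf cfx; apply: cvgB; [exact: cvg_cst|exact: cfx].
have chc : {in D, continuous (fun x => c * h x)}.
  by move=> x /ch chx; apply: cvgM; [exact: cvg_cst|exact: chx].
have fcK x : 0 < x -> `|c - f x| <= `|c| + Kf.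
  by move=> /fK fxK; rewrite (le_trans (ler_normB _ _)) // lerD2l.
have hcK x : 0 < x -> `|c * h x| <= `|c| * Kh.
  by move=> /hK hxK; rewrite normrM ler_wpM2l.
rewrite avgB; [|exact: bounded_avg_integrable cfc fcK|exact: bounded_avg_integrable chc hcK].
rewrite avgZ; last exact: bounded_avg_integrable ch hK.
rewrite (avgB (fun=> c) f) ?avg_cst //; last exact: bounded_avg_integrable cf fK.
apply: (bounded_avg_integrable (K := `|c|)) => // x _; exact: cvg_cst.
Qed.
End half_line.

Section clamp.
Context {R : realType}.
Variables (a b : R).
Hypothesis ab : a < b.

(* Extending by constants outside [a, b] turns continuity within [a, b] into
   continuity on an open interval, as required by continuity_under_integral. *)
Definition clamp (s : R) : R := Num.min (Num.max s a) b.

Lemma clamp_id s : a <= s <= b -> clamp s = s.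
Proof. by case/andP=> sa sb; rewrite /clamp max_l // min_l. Qed.

Lemma clamp_itv s : a <= clamp s <= b.
Proof.
rewrite /clamp le_min ge_min lexx orbT andbT le_max lexx orbT /=.
exact: ltW.
Qed.

Lemma continuous_clamp : continuous clamp.
Proof.
move=> x; apply: (@continuous_min _ _ (fun s => Num.max s a) (cst b)); last exact: cvg_cst.
by apply: (@continuous_max _ _ id (cst a)); [exact: cvg_id|exact: cvg_cst].
Qed.

Lemma continuous_clamp_comp (f : R -> R) :
  {within `[a, b], continuous f} -> continuous (f \o clamp).
Proof.
have clamp_in y : `[a, b]%classic (clamp y) by rewrite /= in_itv /= clamp_itv.
move=> /subspace_continuousP cf x; apply: cvg_comp (cf _ (clamp_in x)).
move=> P /(continuous_clamp x) Pnear.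
by apply: (@filterS _ (nbhs x) _ _ _ _ Pnear) => y /= /(_ (clamp_in y)).
Qed.
End clamp.
Arguments clamp_itv {R a b}.
Arguments clamp_id {R a b}.
Arguments continuous_clamp_comp {R a b}.

Section parametric_integral.
Context {R : realType}.
Local Notation mu := (@lebesgue_measure R).
Local Notation D := (`]0%R, +oo[%classic : set R).

Lemma continuous_within_int0oo (phi : R -> R -> R) (a b K : R) : a < b ->
  (forall s, a <= s <= b -> {in D, continuous (phi s)}) ->
  (forall s g, a <= s <= b -> 0 < g -> `|phi s g| <= K * (1 + g ^+ 2)^-1) ->
  (forall g, 0 < g -> {within `[a, b], continuous (phi^~ g)}) ->
  {within `[a, b], continuous (fun s => int0oo (phi s))}.
Proof.
move=> ab cphi bphi cphig.
pose psi s := phi (clamp a b s).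
have psi_int s : mu.-integrable D (EFin \o psi s).
  exact: dominated_oneDsqrV_integrable (cphi _ (clamp_itv ab s))
    (fun g => bphi _ g (clamp_itv ab s)).
have cpsi : {in `]a - 1, b + 1[%classic, continuous (fun s => \int[mu]_(x in D) psi s x)}.
  apply: (@continuity_under_integral _ _ _ mu psi D _ (a - 1) (b + 1) _ _
    (fun g => `|K| * (1 + g ^+ 2)^-1)).
  - by [].
  - by move=> s _; exact: psi_int.
  - apply: aeW => g; rewrite /= in_itv /= andbT => g0 s _.
    exact: (continuous_clamp_comp ab _ (cphig g g0) s).
  - apply: (dominated_oneDsqrV_integrable (K := `|K|)).
      by move=> x _; apply: cvgM; [exact: cvg_cst|exact: continuous_oneDsqrV].
    by move=> x _; rewrite normrM normr_id ger0_norm ?oneDsqrV_ge0.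
  - move=> s _; apply: aeW => g; rewrite /= in_itv /= andbT => g0.
    rewrite (le_trans (bphi _ _ (clamp_itv ab s) g0)) //.
    by rewrite ler_wpM2r ?oneDsqrV_ge0 ?ler_norm.
have : {within `[a, b], continuous (fun s => \int[mu]_(x in D) psi s x)}.
  apply: continuous_in_subspaceT => x; rewrite inE /= in_itv /= => /andP[ax xb].
  apply: cpsi; rewrite inE /= in_itv /= (lt_le_trans _ ax) ?gtrBl //.
  by rewrite (le_lt_trans xb) ?ltrDl.
apply: subspace_eq_continuous => x; rewrite inE /= in_itv /= => xab.
by rewrite /int0oo /psi /from_subspace /= clamp_id.
Qed.
End parametric_integral.

Section duality.
Context {R : realType}.
Local Notation mu := (@lebesgue_measure R).
Local Notation D := (`]0%R, +oo[%classic : set R).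

(* (u1, u2) stands for bar Theta; C1 and C2 are the bounds of the theorem for T = t. *)
Variables (u1 u2 w1 w2 : R -> R -> R) (t C1 C2 : R).
Hypothesis t_gt0 : 0 < t.
Hypothesis u_dg : forall s g, 0 <= s -> 0 < g ->
  [/\ derivable (u1 s) g 1, derivable (u2 s) g 1,
      {for g, continuous (dg u1 s)} & {for g, continuous (dg u2 s)}].
Hypothesis u_dt : forall s g, 0 < s -> 0 < g ->
  derivable (u1^~ g) s 1 /\ derivable (u2^~ g) s 1.
Hypothesis u_t0 : forall g, 0 < g ->
  u1^~ g @ 0^'+ --> u1 0 g /\ u2^~ g @ 0^'+ --> u2 0 g.
Hypothesis u_bound : forall s g, 0 <= s <= t -> 0 < g ->
  [/\ `|u1 s g| <= C1 * (g ^+ 2 / (1 + g ^+ 2)),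
      `|u2 s g| <= C1 * (g ^+ 2 / (1 + g ^+ 2)),
      `|g * dg u1 s g| <= C1 * (g ^+ 2 / (1 + g ^+ 2)) &
      `|g * dg u2 s g| <= C1 * (g ^+ 2 / (1 + g ^+ 2))].
Hypothesis u_eq1 : forall s g, 0 < s -> 0 < g ->
  dt u1 s g + 4 * g * dg u1 s g + 6 * u1 s g - 13 * u2 s g = 0.
Hypothesis u_eq2 : forall s g, 0 < s -> 0 < g ->
  dt u2 s g + 4 * g * dg u2 s g + 9 * u2 s g
    - 10 / (1 + g ^+ 2) * (u1 s g + g ^+ 2 * avg (u1 s)) = 0.
Hypothesis w_dg : forall r g, 0 <= r -> 0 < g ->
  [/\ derivable (w1 r) g 1, derivable (w2 r) g 1,
      {for g, continuous (dg w1 r)} & {for g, continuous (dg w2 r)}].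
Hypothesis w_dt : forall r g, 0 < r -> 0 < g ->
  derivable (w1^~ g) r 1 /\ derivable (w2^~ g) r 1.
Hypothesis w_t0 : forall g, 0 < g ->
  w1^~ g @ 0^'+ --> w1 0 g /\ w2^~ g @ 0^'+ --> w2 0 g.
Hypothesis w_bound : forall r g, 0 <= r <= t -> 0 < g ->
  [/\ `|w1 r g| <= C2, `|w2 r g| <= C2, `|g * dg w1 r g| <= C2 & `|g * dg w2 r g| <= C2].
Hypothesis w_eq1 : forall r g, 0 < r -> 0 < g ->
  dt w1 r g - 4 * g * dg w1 r g + 10 * w1 r g - 10 / (1 + g ^+ 2) * w2 r g = 0.
Hypothesis w_eq2 : forall r g, 0 < r -> 0 < g ->
  dt w2 r g - 4 * g * dg w2 r g + 13 * w2 r g - 13 * w1 r g = 0.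
Hypothesis w_init : forall g, 0 <= g -> w1 0 g = 1 /\ w2 0 g = 1.

Definition pairing (s g : R) : R := u1 s g * (1 - w1 (t - s) g) + u2 s g * (1 - w2 (t - s) g).

Definition dg_pairing (s g : R) : R :=
  dg u1 s g * (1 - w1 (t - s) g) + u1 s g * - dg w1 (t - s) g
  + (dg u2 s g * (1 - w2 (t - s) g) + u2 s g * - dg w2 (t - s) g).

Definition dt_pairing (s g : R) : R :=
  dt u1 s g * (1 - w1 (t - s) g) + u1 s g * dt w1 (t - s) g
  + (dt u2 s g * (1 - w2 (t - s) g) + u2 s g * dt w2 (t - s) g).

Definition density (s g : R) : R := (g ^+ 2)^-1 * pairing s g.

Definition flux (s g : R) : R := g^-1 * pairing s g.

Definition dflux (s g : R) : R := (g ^+ 2)^-1 * (g * dg_pairing s g - pairing s g).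

Definition source (s g : R) : R := avg (u1 s) - u1 s g - avg (u1 s) * w2 (t - s) g.

Let reflect_itv {s} : 0 <= s <= t -> 0 <= t - s <= t.
Proof. by move=> /andP[s0 st]; apply/andP; split; lra. Qed.

Let t_itv : 0 <= t <= t. Proof. by rewrite lexx ltW. Qed.
Let zero_itv : (0 : R) <= 0 <= t. Proof. by rewrite lexx ltW. Qed.

Lemma C1_ge0 : 0 <= C1.
Proof.
have [u1C _ _ _] := u_bound 0 1 zero_itv ltr01.
have q1 : 0 < 1 ^+ 2 / (1 + 1 ^+ 2) :> R by rewrite expr1n divr_gt0 ?ltr0Sn.
by rewrite -(pmulr_lge0 _ q1) (le_trans _ u1C).
Qed.

Lemma C2_ge0 : 0 <= C2.
Proof. by have [w1C _ _ _] := w_bound 0 1 zero_itv ltr01; rewrite (le_trans _ w1C). Qed.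

Lemma norm_u_le {s g : R} : 0 <= s <= t -> 0 < g -> `|u1 s g| <= C1 /\ `|u2 s g| <= C1.
Proof.
move=> st g0; have [u1C u2C _ _] := u_bound s g st g0.
have q1 : g ^+ 2 / (1 + g ^+ 2) <= 1 by rewrite ler_pdivrMr ?mul1r ?lerDr // ltr_pwDl ?sqr_ge0.
have CqC : C1 * (g ^+ 2 / (1 + g ^+ 2)) <= C1 by rewrite ler_piMr ?C1_ge0.
by split; apply: le_trans CqC.
Qed.

Lemma continuous_u_time {g : R} : 0 < g ->
  {within `[0, t], continuous (u1^~ g)} /\ {within `[0, t], continuous (u2^~ g)}.
Proof.
move=> g0; have [u10 u20] := u_t0 g g0.
by split; [apply: (continuous_within_itv0 t_gt0 _ u10)|apply: (continuous_within_itv0 t_gt0 _ u20)];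
  move=> s s0; have [] := u_dt s g s0 g0.
Qed.

Lemma continuous_w_reflect {g : R} : 0 < g ->
  {within `[0, t], continuous (fun s => w1 (t - s) g)} /\
  {within `[0, t], continuous (fun s => w2 (t - s) g)}.
Proof.
move=> g0; have [w10 w20] := w_t0 g g0.
by split; [apply: (continuous_within_itv0_reflect t_gt0 _ w10)|
  apply: (continuous_within_itv0_reflect t_gt0 _ w20)]; move=> r r0; have [] := w_dt r g r0 g0.
Qed.

Lemma continuous_u_space {s g : R} : 0 <= s -> 0 < g ->
  [/\ {for g, continuous (u1 s)}, {for g, continuous (u2 s)},
      {for g, continuous (dg u1 s)} & {for g, continuous (dg u2 s)}].
Proof.
move=> s0 g0; have [d1 d2 c1 c2] := u_dg s g s0 g0.
by split => //; exact: derivable1_continuous.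
Qed.

Lemma continuous_w_space {r g : R} : 0 <= r -> 0 < g ->
  [/\ {for g, continuous (w1 r)}, {for g, continuous (w2 r)},
      {for g, continuous (dg w1 r)} & {for g, continuous (dg w2 r)}].
Proof.
move=> r0 g0; have [d1 d2 c1 c2] := w_dg r g r0 g0.
by split => //; exact: derivable1_continuous.
Qed.

Lemma continuous_pairing {s g : R} : 0 <= s <= t -> 0 < g -> {for g, continuous (pairing s)}.
Proof.
move=> /andP[s0 st] g0; have ts : 0 <= t - s by lra.
have [c1 c2 _ _] := continuous_u_space s0 g0; have [e1 e2 _ _] := continuous_w_space ts g0.
exact: cvg_dot2 c1 c2 (cvg_oneB e1) (cvg_oneB e2).
Qed.

Lemma continuous_dg_pairing {s g : R} : 0 <= s <= t -> 0 < g ->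
  {for g, continuous (dg_pairing s)}.
Proof.
move=> /andP[s0 st] g0; have ts : 0 <= t - s by lra.
have [c1 c2 d1 d2] := continuous_u_space s0 g0; have [e1 e2 f1 f2] := continuous_w_space ts g0.
have [v1 v2] := (cvg_oneB e1, cvg_oneB e2).
exact: cvgD (cvgD (cvgM d1 v1) (cvgM c1 (cvgN f1))) (cvgD (cvgM d2 v2) (cvgM c2 (cvgN f2))).
Qed.

Lemma continuous_within_pairing {g : R} : 0 < g ->
  {within `[0, t], continuous (pairing^~ g)}.
Proof.
move=> g0 x; have [c1 c2] := continuous_u_time g0; have [e1 e2] := continuous_w_reflect g0.
exact: cvg_dot2 (c1 x) (c2 x) (cvg_oneB (e1 x)) (cvg_oneB (e2 x)).
Qed.

Lemma continuous_density {s : R} : 0 <= s <= t -> {in D, continuous (density s)}.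
Proof.
move=> st g; rewrite inE /= in_itv /= andbT => g0.
exact: cvgM (continuous_sqrV g0) (continuous_pairing st g0).
Qed.

Lemma continuous_dflux {s : R} : 0 <= s <= t -> {in D, continuous (dflux s)}.
Proof.
move=> st g; rewrite inE /= in_itv /= andbT => g0.
exact: cvgM (continuous_sqrV g0)
  (cvgB (cvgM cvg_id (continuous_dg_pairing st g0)) (continuous_pairing st g0)).
Qed.

Lemma norm_oneB_w_le {r g : R} : 0 <= r <= t -> 0 < g ->
  `|1 - w1 r g| <= 1 + C2 /\ `|1 - w2 r g| <= 1 + C2.
Proof.
move=> rt g0; have [w1C w2C _ _] := w_bound r g rt g0.
by split; rewrite (le_trans (ler_normB _ _)) // normr1 lerD2l.
Qed.

Lemma norm_pairing_le {s g : R} : 0 <= s <= t -> 0 < g ->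
  `|pairing s g| <= 2 * C1 * (1 + C2) * (g ^+ 2 / (1 + g ^+ 2)).
Proof.
move=> st g0; have [u1C u2C _ _] := u_bound s g st g0.
have [v1C v2C] := norm_oneB_w_le (reflect_itv st) g0.
by rewrite (le_trans (norm_dot2_le u1C u2C v1C v2C)) //; lra.
Qed.

Lemma norm_dflux_numerator_le {s g : R} : 0 <= s <= t -> 0 < g ->
  `|g * dg_pairing s g - pairing s g| <= C1 * (4 + 6 * C2) * (g ^+ 2 / (1 + g ^+ 2)).
Proof.
move=> st g0; have [u1C u2C du1C du2C] := u_bound s g st g0.
have [w1C w2C dw1C dw2C] := w_bound (t - s) g (reflect_itv st) g0.
have [v1C v2C] := norm_oneB_w_le (reflect_itv st) g0.
have -> : g * dg_pairing s g - pairing s g =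
    (g * dg u1 s g * (1 - w1 (t - s) g) + g * dg u2 s g * (1 - w2 (t - s) g))
    + (u1 s g * - (g * dg w1 (t - s) g) + u2 s g * - (g * dg w2 (t - s) g))
    - pairing s g.
  by rewrite /dg_pairing; ring.
rewrite (le_trans (ler_normB _ _)) // (le_trans (lerD (ler_normD _ _) (norm_pairing_le st g0))) //.
rewrite -normrN in dw1C; rewrite -normrN in dw2C.
rewrite (le_trans (lerD (lerD (norm_dot2_le du1C du2C v1C v2C)
  (norm_dot2_le u1C u2C dw1C dw2C)) (lexx _))) //.
lra.
Qed.

Lemma is_derive_flux {s g : R} : 0 <= s <= t -> 0 < g -> is_derive g 1 (flux s) (dflux s g).
Proof.
move=> /andP[s0 st] g0; have ts : 0 <= t - s by lra.
have [du1 du2 _ _] := u_dg s g s0 g0; have [dw1 dw2 _ _] := w_dg (t - s) g ts g0.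
have dP : is_derive g 1 (pairing s) (dg_pairing s g) := is_derive_dot2
  (derivable1_is_derive du1) (derivable1_is_derive du2) (is_derive_oneB dw1) (is_derive_oneB dw2).
have g_neq0 : id g != 0 by rewrite gt_eqF.
have := is_deriveM (is_deriveV g_neq0 (is_derive_id g 1)) dP.
by move/is_derive_eq; apply; rewrite /dflux /GRing.scale /=; field.
Qed.

Lemma is_derive_density {s g : R} : 0 < s < t -> 0 < g ->
  is_derive s 1 (density^~ g) ((g ^+ 2)^-1 * dt_pairing s g).
Proof.
move=> /andP[s0 st] g0; have ts : 0 < t - s by lra.
have [du1 du2] := u_dt s g s0 g0; have [dw1 dw2] := w_dt (t - s) g ts g0.
have dP : is_derive s 1 (pairing^~ g) (dt_pairing s g) := is_derive_dot2
  (derivable1_is_derive du1) (derivable1_is_derive du2)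
  (is_derive_oneB_reflect dw1) (is_derive_oneB_reflect dw2).
by have := is_deriveZ ((g ^+ 2)^-1) dP; move/is_derive_eq; apply.
Qed.

Lemma dt_pairing_eq {s g : R} : 0 < s < t -> 0 < g ->
  dt_pairing s g = -4 * (g * dg_pairing s g - pairing s g)
    + 10 * (g ^+ 2 / (1 + g ^+ 2)) * source s g.
Proof.
move=> /andP[s0 st] g0; have ts : 0 < t - s by lra.
have oneDsqr_neq0 : 1 + g ^+ 2 != 0 by rewrite gt_eqF // ltr_pwDl ?sqr_ge0.
have E1 : dt u1 s g = 13 * u2 s g - 6 * u1 s g - 4 * g * dg u1 s g.
  by have := u_eq1 s g s0 g0; lra.
have E2 : dt u2 s g = 10 / (1 + g ^+ 2) * (u1 s g + g ^+ 2 * avg (u1 s))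
    - 9 * u2 s g - 4 * g * dg u2 s g.
  by have := u_eq2 s g s0 g0; lra.
have E3 : dt w1 (t - s) g = 4 * g * dg w1 (t - s) g - 10 * w1 (t - s) g
    + 10 / (1 + g ^+ 2) * w2 (t - s) g.
  by have := w_eq1 (t - s) g ts g0; lra.
have E4 : dt w2 (t - s) g = 4 * g * dg w2 (t - s) g - 13 * w2 (t - s) g + 13 * w1 (t - s) g.
  by have := w_eq2 (t - s) g ts g0; lra.
by rewrite /dt_pairing /dg_pairing /pairing /source E1 E2 E3 E4; field.
Qed.

Lemma norm_density_le {s g : R} : 0 <= s <= t -> 0 < g ->
  `|density s g| <= 2 * C1 * (1 + C2) * (1 + g ^+ 2)^-1.
Proof. by move=> st g0; exact: norm_sqrVM_le g0 (norm_pairing_le st g0). Qed.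

Lemma int0oo_dflux {s : R} : 0 <= s <= t -> int0oo (dflux s) = 0.
Proof.
move=> st; apply: (int0oo_derive_eq0 (k := flux s)).
- by move=> g g0; exact: is_derive_flux.
- exact: continuous_dflux st.
- apply: (dominated_oneDsqrV_integrable (continuous_dflux st)) => g g0.
  exact: norm_sqrVM_le g0 (norm_dflux_numerator_le st g0).
- apply: (cvg_at_right0_dominated (2 * C1 * (1 + C2))) => g g0.
  exact: norm_invM_le g0 (norm_pairing_le st g0).
- apply: (cvgy_dominated (2 * C1 * (1 + C2))) => g g0.
  exact: norm_invM_le g0 (norm_pairing_le st g0).
Qed.

Lemma norm_avg_u1_le {s : R} : 0 <= s <= t -> `|avg (u1 s)| <= C1.
Proof.
move=> /[dup] st /andP[s0 _]; apply: norm_avg_le => [g|g g0]; last exact: (norm_u_le st g0).1.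
by rewrite inE /= in_itv /= andbT => g0; have [] := continuous_u_space s0 g0.
Qed.

Lemma continuous_source {s : R} : 0 <= s <= t -> {in D, continuous (source s)}.
Proof.
move=> /andP[s0 st] g; rewrite inE /= in_itv /= andbT => g0.
have ts : 0 <= t - s by lra.
have [c1 _ _ _] := continuous_u_space s0 g0; have [_ e2 _ _] := continuous_w_space ts g0.
exact: cvgB (cvgB (cvg_cst _) c1) (cvgM (cvg_cst _) e2).
Qed.

Lemma norm_source_le {s g : R} : 0 <= s <= t -> 0 < g -> `|source s g| <= 2 * C1 + C1 * C2.
Proof.
move=> st g0; have aC := norm_avg_u1_le st; have [u1C _] := norm_u_le st g0.
have [_ w2C _ _] := w_bound (t - s) g (reflect_itv st) g0.
have aw : `|avg (u1 s) * w2 (t - s) g| <= C1 * C2 by rewrite normrM ler_pM.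
have : `|source s g| <= `|avg (u1 s)| + `|u1 s g| + `|avg (u1 s) * w2 (t - s) g|.
  by rewrite /source (le_trans (ler_normB _ _)) // lerD2r ler_normB.
lra.
Qed.

Lemma partial1of2_density {s g : R} : 0 < s < t -> 0 < g ->
  partial1of2 density s g = -4 * dflux s g + 10 * (source s g / (1 + g ^+ 2)).
Proof.
move=> st g0; have dd := is_derive_density st g0.
rewrite partial1of2E derive_val dt_pairing_eq //.
by rewrite /dflux /source; field; rewrite !gt_eqF // ltr_pwDl ?sqr_ge0.
Qed.

Lemma norm_partial1of2_density_le {s g : R} : 0 < s < t -> 0 < g ->
  `|partial1of2 density s g| <=
    (4 * (C1 * (4 + 6 * C2)) + 10 * (2 * C1 + C1 * C2)) * (1 + g ^+ 2)^-1.
Proof.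
move=> /[dup] st /andP[s0 st'] g0; have st0 : 0 <= s <= t by rewrite !ltW.
have dfK : `|dflux s g| <= C1 * (4 + 6 * C2) * (1 + g ^+ 2)^-1 :=
  norm_sqrVM_le g0 (norm_dflux_numerator_le st0 g0).
have srcK := norm_div_oneDsqr_le g (norm_source_le st0 g0).
rewrite partial1of2_density // (le_trans (ler_normD _ _)) //.
rewrite [`|-4 * _|]normrM [`|10 * _|]normrM normrN !normr_nat; lra.
Qed.

Lemma int0oo_partial1of2_density {s : R} : 0 < s < t ->
  int0oo (partial1of2 density s) = - (5 * pi) * (avg (u1 s) * kappa w2 (t - s)).
Proof.
move=> /[dup] st /andP[s0 st']; have st0 : 0 <= s <= t by rewrite !ltW.
have ts : 0 <= t - s by lra.
transitivity (int0oo (fun g => -4 * dflux s g + 10 * (source s g / (1 + g ^+ 2)))).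
  apply: eq_Rintegral => g; rewrite inE /= in_itv /= andbT => g0.
  exact: partial1of2_density.
rewrite int0oo_linear; first last.
- exact: bounded_avg_integrable (continuous_source st0) (fun g => norm_source_le st0).
- apply: (dominated_oneDsqrV_integrable (continuous_dflux st0)) => g g0.
  exact: norm_sqrVM_le g0 (norm_dflux_numerator_le st0 g0).
have cu1 : {in D, continuous (u1 s)}.
  by move=> g; rewrite inE /= in_itv /= andbT => g0; have [] := continuous_u_space (ltW s0) g0.
have cw2 : {in D, continuous (w2 (t - s))}.
  by move=> g; rewrite inE /= in_itv /= andbT => g0; have [] := continuous_w_space ts g0.
have w2C g : 0 < g -> `|w2 (t - s) g| <= C2.
  by move=> g0; have [] := w_bound (t - s) g (reflect_itv st0) g0.
rewrite int0oo_dflux // int0oo_avg /source.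
rewrite (avg_affine _ cu1 cw2 (fun g g0 => proj1 (norm_u_le st0 g0)) w2C).
by rewrite /kappa; field.
Qed.

Lemma derive_int0oo_density {s : R} : 0 < s < t ->
  derivable (fun r => int0oo (density r)) s 1 /\
  derive1 (fun r => int0oo (density r)) s = - (5 * pi) * (avg (u1 s) * kappa w2 (t - s)).
Proof.
move=> st; have s_in : `]0, t[%classic s by rewrite /= in_itv.
set K := 4 * (C1 * (4 + 6 * C2)) + 10 * (2 * C1 + C1 * C2).
have K_ge0 : 0 <= K by rewrite /K ?(addr_ge0, mulr_ge0) ?C1_ge0 ?C2_ge0.
have dom_ge0 (g : R) : 0 <= K * (1 + g ^+ 2)^-1 by rewrite mulr_ge0 ?oneDsqrV_ge0.
have dom_int : mu.-integrable D (EFin \o fun g => K * (1 + g ^+ 2)^-1).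
  apply: (dominated_oneDsqrV_integrable (K := K)) => [g _|g _]; last by rewrite ger0_norm.
  by apply: cvgM; [exact: cvg_cst|exact: continuous_oneDsqrV].
have dens_int r : `]0, t[%classic r -> mu.-integrable D (EFin \o density r).
  rewrite /= in_itv /= => /andP[r0 rt]; have rt0 : 0 <= r <= t by rewrite !ltW.
  exact: dominated_oneDsqrV_integrable (continuous_density rt0) (fun g => norm_density_le rt0).
have dens_der r g : `]0, t[%classic r -> D g -> derivable (density^~ g) r 1.
  rewrite /= !in_itv /= andbT => rt g0; apply: ex_derive; exact: is_derive_density rt g0.
have dens_dom r g : `]0, t[%classic r -> D g -> `|partial1of2 density r g| <= K * (1 + g ^+ 2)^-1.
  by rewrite /= !in_itv /= andbT => rt g0; exact: norm_partial1of2_density_le.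
split; first exact: (derivable_under_integral _ s_in dens_int dens_der dom_ge0 dom_int dens_dom).
rewrite (differentiation_under_integral _ s_in dens_int dens_der dom_ge0 dom_int dens_dom) //.
exact: int0oo_partial1of2_density.
Qed.

Lemma continuous_within_int0oo_density :
  {within `[0, t], continuous (fun s => int0oo (density s))}.
Proof.
apply: (continuous_within_int0oo _ _ _ (2 * C1 * (1 + C2)) t_gt0).
- by move=> s st; exact: continuous_density st.
- by move=> s g st g0; exact: norm_density_le.
- by move=> g g0 x; exact: cvgM (cvg_cst _) (continuous_within_pairing g0 x).
Qed.

Lemma continuous_within_avg_u1 : {within `[0, t], continuous (fun s => avg (u1 s))}.
Proof.
have : {within `[0, t], continuous (fun s => int0oo (fun g => u1 s g / (1 + g ^+ 2)))}.
  apply: (continuous_within_int0oo _ _ _ C1 t_gt0).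
  - move=> s /andP[s0 _] g; rewrite inE /= in_itv /= andbT => g0.
    by have [c1 _ _ _] := continuous_u_space s0 g0; exact: continuous_div_oneDsqr.
  - by move=> s g st g0; exact: norm_div_oneDsqr_le g (norm_u_le st g0).1.
  - move=> g g0 x; have [c1 _] := continuous_u_time g0.
    by apply: cvgM; [exact: c1|exact: cvg_cst].
by move=> cI x; apply: cvgM; [exact: cvg_cst|exact: cI].
Qed.

Lemma continuous_within_kappa : {within `[0, t], continuous (fun s => kappa w2 (t - s))}.
Proof.
have : {within `[0, t], continuous (fun s => int0oo (fun g => w2 (t - s) g / (1 + g ^+ 2)))}.
  apply: (continuous_within_int0oo _ _ _ C2 t_gt0).
  - move=> s /andP[s0 st] g; rewrite inE /= in_itv /= andbT => g0.
    have ts : 0 <= t - s by lra.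
    by have [_ c2 _ _] := continuous_w_space ts g0; exact: continuous_div_oneDsqr.
  - move=> s g st g0; have [_ w2C _ _] := w_bound (t - s) g (reflect_itv st) g0.
    exact: norm_div_oneDsqr_le g w2C.
  - move=> g g0 x; have [_ e2] := continuous_w_reflect g0.
    by apply: cvgM; [exact: e2|exact: cvg_cst].
by move=> cI x; apply: cvgM; [exact: cvg_cst|exact: cI].
Qed.

Lemma int0oo_density_t : int0oo (density t) = 0.
Proof.
transitivity (int0oo (fun=> 0 : R)); last by rewrite /int0oo Rintegral_cst // mul0r.
apply: eq_Rintegral => g; rewrite inE /= in_itv /= andbT => g0.
rewrite /density /pairing subrr; have [-> ->] := w_init g (ltW g0).
by rewrite subrr !mulr0 addr0 mulr0.
Qed.

Lemma int0oo_density_0 : int0oo (density 0) =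
  wint (fun g => u1 0 g + u2 0 g) - wint (fun g => u1 0 g * w1 t g + u2 0 g * w2 t g).
Proof.
have wintE f : wint f = int0oo (fun g => (g ^+ 2)^-1 * f g).
  by apply: eq_Rintegral => g _; rewrite mulrC.
have cu g : 0 < g -> {for g, continuous (u1 0)} /\ {for g, continuous (u2 0)}.
  by move=> g0; have [] := continuous_u_space (lexx 0) g0.
have cw g : 0 < g -> {for g, continuous (w1 t)} /\ {for g, continuous (w2 t)}.
  by move=> g0; have [] := continuous_w_space (ltW t_gt0) g0.
rewrite !wintE /int0oo -RintegralB //.
- apply: eq_Rintegral => g _; rewrite /density /pairing subr0; ring.
- apply: (dominated_oneDsqrV_integrable (K := 2 * C1)).
    move=> g; rewrite inE /= in_itv /= andbT => g0.
    by have [c1 c2] := cu g g0; exact: cvgM (continuous_sqrV g0) (cvgD c1 c2).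
  move=> g g0; have [u1C u2C _ _] := u_bound 0 g zero_itv g0.
  by apply: (norm_sqrVM_le g0); rewrite (le_trans (ler_normD _ _)) //; lra.
- apply: (dominated_oneDsqrV_integrable (K := 2 * C1 * C2)).
    move=> g; rewrite inE /= in_itv /= andbT => g0.
    have [c1 c2] := cu g g0; have [e1 e2] := cw g g0.
    exact: cvgM (continuous_sqrV g0) (cvg_dot2 c1 c2 e1 e2).
  move=> g g0; have [u1C u2C _ _] := u_bound 0 g zero_itv g0.
  have [w1C w2C _ _] := w_bound t g t_itv g0.
  by apply: (norm_sqrVM_le g0); rewrite (le_trans (norm_dot2_le u1C u2C w1C w2C)) //; lra.
Qed.

Theorem duality_formula :
  10 * \int[mu]_(s in `[0, t]) (avg (u1 s) * kappa w2 (t - s)) =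
  2 / pi * (wint (fun g => u1 0 g + u2 0 g)
            - wint (fun g => u1 0 g * w1 t g + u2 0 g * w2 t g)).
Proof.
have pi_neq0 : pi != 0 :> R by rewrite gt_eqF ?pi_gt0.
have cAK : {within `[0, t], continuous (fun s => avg (u1 s) * kappa w2 (t - s))}.
  by move=> x; apply: cvgM; [exact: continuous_within_avg_u1|exact: continuous_within_kappa].
have [_ G0 Gt] := (continuous_within_itvP _ t_gt0).1 continuous_within_int0oo_density.
have ftc : \int[mu]_(s in `[0, t]) (- (5 * pi) * (avg (u1 s) * kappa w2 (t - s)))
    = int0oo (density t) - int0oo (density 0).
  rewrite /Rintegral (continuous_FTC2 t_gt0 _ (And3 _ G0 Gt)) //.
  - by move=> x; apply: cvgM; [exact: cvg_cst|exact: cAK].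
  - by move=> s; rewrite in_itv /= => st; exact: (derive_int0oo_density st).1.
  - by move=> s; rewrite in_itv /= => st; exact: (derive_int0oo_density st).2.
rewrite RintegralZl // in ftc; last first.
  by apply: continuous_compact_integrable => //; exact: segment_compact.
rewrite int0oo_density_t int0oo_density_0 in ftc.
set I := \int[mu]_(s in _) _ in ftc *.
have -> : wint (fun g => u1 0 g + u2 0 g)
    - wint (fun g => u1 0 g * w1 t g + u2 0 g * w2 t g) = 5 * pi * I by lra.
by move: pi_neq0; move: (pi : R) => p p0; field.
Qed.
End duality.
Arguments duality_formula {R u1 u2 w1 w2 t C1 C2}.

Theorem lemma2p1 (R : realType)
  (Th1 Th2 : R -> R -> R) (Th01 Th02 : R -> R) (w1 w2 : R -> R -> R)
  (* initial condition Theta(t = 0) = Theta^(0) *)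
  (HTh_init : forall g, 0 <= g -> Th1 0 g = Th01 g /\ Th2 0 g = Th02 g)
  (* regularity of bar Theta: C^1 in gamma > 0 (for t >= 0), differentiable in
     t > 0, right-continuous in t at t = 0 *)
  (HTh_dg : forall t g, 0 <= t -> 0 < g ->
     [/\ derivable (fun h => bar Th1 t h) g 1, derivable (fun h => bar Th2 t h) g 1,
         {for g, continuous (dg (bar Th1) t)} & {for g, continuous (dg (bar Th2) t)}])
  (HTh_dt : forall t g, 0 < t -> 0 < g ->
     derivable (fun s => bar Th1 s g) t 1 /\ derivable (fun s => bar Th2 s g) t 1)
  (HTh_t0 : forall g, 0 < g ->
     (fun s => bar Th1 s g) @ 0^'+ --> bar Th1 0 g /\
     (fun s => bar Th2 s g) @ 0^'+ --> bar Th2 0 g)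
  (* bounds, locally uniform in time: bar Theta = O(gamma^2/(1+gamma^2)) *)
  (HTh_bd : forall T, 0 <= T -> exists C : R, forall s g, 0 <= s <= T -> 0 < g ->
     [/\ `|bar Th1 s g| <= C * (g ^+ 2 / (1 + g ^+ 2)),
         `|bar Th2 s g| <= C * (g ^+ 2 / (1 + g ^+ 2)),
         `|g * dg (bar Th1) s g| <= C * (g ^+ 2 / (1 + g ^+ 2)) &
         `|g * dg (bar Th2) s g| <= C * (g ^+ 2 / (1 + g ^+ 2))])
  (* the equations for bar Theta *)
  (HTh_eq1 : forall t g, 0 < t -> 0 < g ->
     dt (bar Th1) t g + 4 * g * dg (bar Th1) t g + 6 * bar Th1 t g
       - 13 * bar Th2 t g = 0)
  (HTh_eq2 : forall t g, 0 < t -> 0 < g ->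
     dt (bar Th2) t g + 4 * g * dg (bar Th2) t g + 9 * bar Th2 t g
       - 10 / (1 + g ^+ 2) * (bar Th1 t g + g ^+ 2 * avg (bar Th1 t)) = 0)
  (* regularity of (w1, w2) *)
  (Hw_dg : forall r g, 0 <= r -> 0 < g ->
     [/\ derivable (fun h => w1 r h) g 1, derivable (fun h => w2 r h) g 1,
         {for g, continuous (dg w1 r)} & {for g, continuous (dg w2 r)}])
  (Hw_dt : forall r g, 0 < r -> 0 < g ->
     derivable (fun s => w1 s g) r 1 /\ derivable (fun s => w2 s g) r 1)
  (Hw_t0 : forall g, 0 < g ->
     (fun s => w1 s g) @ 0^'+ --> w1 0 g /\ (fun s => w2 s g) @ 0^'+ --> w2 0 g)
  (Hw_bd : forall T, 0 <= T -> exists C : R, forall r g, 0 <= r <= T -> 0 < g ->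
     [/\ `|w1 r g| <= C, `|w2 r g| <= C, `|g * dg w1 r g| <= C & `|g * dg w2 r g| <= C])
  (* the equations for (w1, w2) *)
  (Hw_eq1 : forall r g, 0 < r -> 0 < g ->
     dt w1 r g - 4 * g * dg w1 r g + 10 * w1 r g - 10 / (1 + g ^+ 2) * w2 r g = 0)
  (Hw_eq2 : forall r g, 0 < r -> 0 < g ->
     dt w2 r g - 4 * g * dg w2 r g + 13 * w2 r g - 13 * w1 r g = 0)
  (Hw_init : forall g, 0 <= g -> w1 0 g = 1 /\ w2 0 g = 1)
  (t : R) (ht : 0 <= t) :
  10 * (\int[(@lebesgue_measure R)]_(s in `[0%R, t]) (avg (bar Th1 s) * kappa w2 (t - s)))
  = 2 / pi * Ifun Th01 Th02
    - 2 / pi * wint (fun g => (Th01 g - Th01 0) * w1 t g + (Th02 g - Th02 0) * w2 t g).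
Proof.
move: ht; rewrite le_eqVlt => /predU1P[<-|t_gt0].
  rewrite set_itv1 Rintegral_set1 mulr0 /Ifun -mulrBr; apply/esym/eqP.
  rewrite mulf_eq0 subr_eq0; apply/orP; right; apply/eqP/eq_Rintegral => g.
  by rewrite inE /= in_itv /= andbT => g0; have [-> ->] := Hw_init g (ltW g0); rewrite !mulr1.
have [C1 HC1] := HTh_bd t (ltW t_gt0); have [C2 HC2] := Hw_bd t (ltW t_gt0).
rewrite (duality_formula t_gt0 HTh_dg HTh_dt HTh_t0 HC1 HTh_eq1 HTh_eq2
  Hw_dg Hw_dt Hw_t0 HC2 Hw_eq1 Hw_eq2 Hw_init) /Ifun -mulrBr.
have [Th01_0 Th02_0] := HTh_init 0 (lexx 0).
congr (_ * (_ - _)); apply: eq_Rintegral => g; rewrite inE /= in_itv /= andbT => g0;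
  by have [Th1g Th2g] := HTh_init g (ltW g0); rewrite /bar Th1g Th2g Th01_0 Th02_0.
Qed.
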